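(* Let $d_2,d_3\ge 2$, $k\ge 1$ and $d_1=d_2d_3-k\ge 1$, and let $H=\mathbb{C}^{d_1}\otimes\mathbb{C}^{d_2}\otimes\mathbb{C}^{d_3}$. Let $|\Phi\rangle,|\Psi\rangle\in H$ satisfy $\mathrm{rank}(\rho^{A_1}_\Phi)=\mathrm{rank}(\rho^{A_1}_\Psi)=d_1$. Then $|\Phi\rangle$ and $|\Psi\rangle$ are SLOCC equivalent if and only if $\mathcal{T}^{A_1}(\Phi)=\mathcal{T}^{A_1}(\Psi)$.
   Context: The three factors are held by parties $A_1,A_2,A_3$; $\rho^{A_1}_\Phi$ is the reduced density operator of $|\Phi\rangle\langle\Phi|$ on the first factor. Two states in a multipartite space are SLOCC equivalent if one is obtained from the other by applying $L_1\otimes L_2\otimes L_3$ with each $L_i$ an invertible linear operator on the corresponding factor. Definition of $\mathcal{T}^{A_1}$: for $|\Phi\rangle\in H$ with $\mathrm{rank}(\rho^{A_1}_\Phi)=d_1$, write $|\Phi\rangle=\sum_{i=1}^{d_1}|i\rangle^{A_1}|\phi_i\rangle^{A_2A_3}$ for a basis $\{|i\rangle\}$ of $\mathbb{C}^{d_1}$ (so the $|\phi_i\rangle$ are linearly independent and their span has orthogonal complement of dimension $k$ in $\mathbb{C}^{d_2}\otimes\mathbb{C}^{d_3}$). Let $\{|\phi_i^\perp\rangle:1\le i\le k\}$ be any basis of $\mathrm{span}\{|\phi_i\rangle:1\le i\le d_1\}^\perp$. Then $\mathcal{T}^{A_1}(\Phi)$ is the SLOCC equivalence class in $\mathbb{C}^{k}\otimes\mathbb{C}^{d_2}\otimes\mathbb{C}^{d_3}$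 of $\sum_{i=1}^k|i\rangle|\phi_i^\perp\rangle$, where $\{|i\rangle:1\le i\le k\}$ is a basis of $\mathbb{C}^k$; this class does not depend on the choices of bases. *)

(* C is modelled by algC (algebraic complex numbers). *)
From HB Require Import structures.
From mathcomp Require Import all_boot all_order all_algebra all_field.
Set Implicit Arguments. Unset Strict Implicit. Unset Printing Implicit Defensive.
Import Order.TTheory GRing.Theory Num.Theory.
Local Open Scope ring_scope.

(* A state in C^{d1} (x) C^{d2} (x) C^{d3}: Phi i is the (d2 x d3) coefficient
   matrix of |phi_i> in |Phi> = sum_i |i>^{A1} |phi_i>^{A2A3}
   (standard basis {|i>} of C^{d1}), i.e. (Phi i) j l = <i j l | Phi>. *)
Definition tensor3 (d1 d2 d3 : nat) := 'I_d1 -> 'M[algC]_(d2, d3).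

Definition rhoA1 d1 d2 d3 (Phi : tensor3 d1 d2 d3) : 'M[algC]_d1 :=
  \matrix_(i, i') \sum_(j < d2) \sum_(l < d3) (Phi i j l * (Phi i' j l)^*).

(* SLOCC equivalence: Psi = (L1 (x) L2 (x) L3) Phi with invertible L_i. *)
Definition slocc d1 d2 d3 (Phi Psi : tensor3 d1 d2 d3) : Prop :=
  exists (L1 : 'M[algC]_d1) (L2 : 'M[algC]_d2) (L3 : 'M[algC]_d3),
    [/\ L1 \in unitmx, L2 \in unitmx, L3 \in unitmx &
      forall i : 'I_d1,
        Psi i = \sum_(a < d1) L1 i a *: (L2 *m Phi a *m L3^T)].

Definition flatA1 d1 d2 d3 (Phi : tensor3 d1 d2 d3) : 'M[algC]_(d1, d2 * d3) :=
  \matrix_(i, x) mxvec (Phi i) 0 x.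

(* Q (a tensor in C^k (x) C^{d2} (x) C^{d3}) is sum_i |i>|phi_i^perp> for a basis
   {|phi_i^perp>} of span{|phi_i>}^perp (orthogonal complement w.r.t. the Hermitian
   inner product of C^{d2} (x) C^{d3}): its rows are linearly independent and span
   exactly the space of v with <phi_i|v> = 0 for all i. *)
Definition perp_basis_tensor d1 d2 d3 k (Phi : tensor3 d1 d2 d3)
    (Q : tensor3 k d2 d3) : Prop :=
  row_free (flatA1 Q) /\
  (flatA1 Q == kermx (map_mx Num.conj (flatA1 Phi))^T)%MS.

(* T^{A1}(Phi): the SLOCC class (as a predicate on C^k (x) C^{d2} (x) C^{d3})
   of sum_i |i>|phi_i^perp>, for any choice of basis of the complement. *)
Definition TA1 d1 d2 d3 k (Phi : tensor3 d1 d2 d3) : tensor3 k d2 d3 -> Prop :=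
  fun X => exists Q : tensor3 k d2 d3, perp_basis_tensor Phi Q /\ slocc Q X.

From HB Require Import structures.
From mathcomp Require Import all_boot all_order all_algebra all_field.
Import Order.TTheory GRing.Theory Num.Theory.
Local Open Scope ring_scope.
Set Implicit Arguments. Unset Strict Implicit.

(* Flatten a tensor Phi of C^n (x) C^d2 (x) C^d3 into the
   n x (d2 d3) matrix flatA1 Phi whose rows are the vectors |phi_i>.  A local
   operator L2 (x) L3 then acts on rows by right multiplication with an
   invertible matrix [sandwich L2 L3], so SLOCC equivalence becomes the
   relation X ~ L1 X (sandwich L2 L3) on flattened matrices.  T^{A1} is built
   from "perp bases": row-free matrices Q whose row space is the orthogonal
   complement [perp A] of the row space of A.  Three facts carry the proof:
   - transport: if A ~ B, a perp basis Q of A is carried to a perp basis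
     Q (sandwich M2 M3) ~ Q of B, with M_i the inverse conjugate transpose
     of L_i (the contragredient action);
   - biorthogonality: a row-free A is itself a perp basis of each of its
     perp bases (A^perp^perp = A);
   - two row-free matrices with the same row space are ~ (by an L1 alone).
   Transport gives "SLOCC => same T^{A1}".  Conversely, a perp basis Q of
   Phi lies in T^{A1}(Phi) = T^{A1}(Psi), so Q ~ Q' with Q' a perp basis of
   Psi; by biorthogonality Psi is a perp basis of Q', transporting it along
   Q' ~ Q gives B ~ Psi with the same row space as Phi, whence Phi ~ Psi. *)

Notation conjmx X := (map_mx Num.conj X).

Lemma conjmxK m n (X : 'M[algC]_(m, n)) : conjmx (conjmx X) = X.
Proof. by apply/matrixP=> i j; rewrite !mxE conjCK. Qed.

Lemma sum_mxvec_mul m n (X Y : 'M[algC]_(m, n)) :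
  \sum_(x < m * n) mxvec X 0 x * mxvec Y 0 x = \sum_i \sum_j X i j * Y i j.
Proof.
rewrite (reindex (uncurry (@mxvec_index m n))) /=; last first.
  case: (curry_mxvec_bij m n) => g h1 h2.
  by exists g => y _; [apply: h1 | apply: h2].
by rewrite pair_big /=; apply: eq_bigr => -[i j] _ /=; rewrite !mxvecE.
Qed.

Lemma mxvec_pairing m n (X Y : 'M[algC]_(m, n)) :
  mxvec X *m (mxvec Y)^T = (\tr (X *m Y^T))%:M.
Proof.
apply/matrixP=> a b; rewrite !ord1 !mxE /= mulr1n.
under eq_bigr do rewrite mxE.
rewrite sum_mxvec_mul; apply: eq_bigr => i _.
by rewrite mxE; under [RHS]eq_bigr do rewrite mxE.
Qed.

Lemma mxvec_mulmxP m n p (X Y : 'M[algC]_(m * n, p)) :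
  (forall M : 'M_(m, n), mxvec M *m X = mxvec M *m Y) -> X = Y.
Proof.
move=> eqXY; apply/row_matrixP=> i.
by rewrite !rowE -(vec_mxK (delta_mx 0 i)); apply: eqXY.
Qed.

Lemma row_pairingP n (u v : 'rV[algC]_n) :
  (forall w : 'rV_n, u *m w^T = v *m w^T) -> u = v.
Proof.
move=> eq_uv; apply/rowP=> j; have := eq_uv (delta_mx 0 j).
by rewrite trmx_delta -!colE => /matrixP/(_ 0 0); rewrite !mxE.
Qed.

(* The matrix of M |-> L2 M L3^T on vectorized matrices, i.e. of L2 (x) L3;
   it is locked so that rewriting with product lemmas does not unfold it. *)
Fact sandwich_key : unit. Proof. exact: tt. Qed.
Definition sandwich m n (L2 : 'M[algC]_m) (L3 : 'M[algC]_n) : 'M[algC]_(m * n) :=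
  locked_with sandwich_key (lin_mulmx L2 *m lin_mulmxr L3^T).

Lemma mxvec_sandwich m n L2 L3 (M : 'M[algC]_(m, n)) :
  mxvec M *m sandwich L2 L3 = mxvec (L2 *m M *m L3^T).
Proof. by rewrite /sandwich unlock mulmxA /lin_mulmx /lin_mulmxr !mul_vec_lin. Qed.

Lemma sandwichM m n (a c : 'M[algC]_m) (b e : 'M[algC]_n) :
  sandwich a b *m sandwich c e = sandwich (c *m a) (e *m b).
Proof. by apply: mxvec_mulmxP => M; rewrite mulmxA !mxvec_sandwich trmx_mul !mulmxA. Qed.

Lemma sandwich1 m n : sandwich (1%:M : 'M[algC]_m) (1%:M : 'M[algC]_n) = 1%:M.
Proof. by apply: mxvec_mulmxP => M; rewrite mxvec_sandwich trmx1 mul1mx !mulmx1. Qed.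

Lemma sandwich_unit m n (a : 'M[algC]_m) (b : 'M[algC]_n) :
  a \in unitmx -> b \in unitmx -> sandwich a b \in unitmx.
Proof.
move=> ua ub; have := sandwichM a (invmx a) b (invmx b).
by rewrite !mulVmx // sandwich1 => /mulmx1_unit [].
Qed.

Lemma sandwich_adjoint m n (a : 'M[algC]_m) (b : 'M[algC]_n) :
  (conjmx (sandwich a b))^T = sandwich (conjmx a)^T (conjmx b)^T.
Proof.
apply: mxvec_mulmxP => M; apply: row_pairingP => w.
rewrite -(vec_mxK w); set N := vec_mx w.
rewrite mxvec_sandwich -mulmxA -trmx_mul.
have -> : mxvec N *m conjmx (sandwich a b) = mxvec (conjmx a *m N *m (conjmx b)^T).
  rewrite -[mxvec N]conjmxK map_mxvec -map_mxM mxvec_sandwich.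
  by rewrite map_mxvec !map_mxM conjmxK map_trmx.
rewrite !mxvec_pairing; congr (_%:M).
by rewrite !trmx_mul !trmxK !mulmxA mxtrace_mulC !mulmxA.
Qed.

Definition unflat n d2 d3 (M : 'M[algC]_(n, d2 * d3)) : tensor3 n d2 d3 :=
  fun i => vec_mx (row i M).

Lemma flat_unflat n d2 d3 (M : 'M[algC]_(n, d2 * d3)) : flatA1 (unflat M) = M.
Proof. by apply/matrixP=> i x; rewrite !mxE vec_mxK mxE. Qed.

Lemma row_flatA1 n d2 d3 (X : tensor3 n d2 d3) i : row i (flatA1 X) = mxvec (X i).
Proof. by apply/rowP=> x; rewrite !mxE. Qed.

Definition flat_slocc n d2 d3 (X Y : 'M[algC]_(n, d2 * d3)) : Prop :=
  exists (L1 : 'M[algC]_n) (L2 : 'M[algC]_d2) (L3 : 'M[algC]_d3),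
    [/\ L1 \in unitmx, L2 \in unitmx, L3 \in unitmx & Y = L1 *m X *m sandwich L2 L3].

Lemma sloccE n d2 d3 (X Y : tensor3 n d2 d3) :
  slocc X Y <-> flat_slocc (flatA1 X) (flatA1 Y).
Proof.
have row_action L1 L2 L3 i : row i (L1 *m flatA1 X *m sandwich L2 L3) =
    mxvec (\sum_(a < n) L1 i a *: (L2 *m X a *m L3^T)).
  rewrite !row_mul (mulmx_sum_row (row i L1)) mulmx_suml raddf_sum.
  apply: eq_bigr => a _; rewrite -scalemxAl row_flatA1 mxvec_sandwich mxE.
  by rewrite /= (mxvec_is_scalable (L1 i a)).
split=> -[L1 [L2 [L3 [u1 u2 u3 eqY]]]]; exists L1, L2, L3; split=> //.
  by apply/row_matrixP=> i; rewrite row_action row_flatA1 eqY.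
by move=> i; apply: (can_inj mxvecK); rewrite -row_action -row_flatA1 eqY.
Qed.

Lemma flat_slocc_refl n d2 d3 (X : 'M[algC]_(n, d2 * d3)) : flat_slocc X X.
Proof.
exists 1%:M, 1%:M, 1%:M; split; rewrite ?unitmx1 //.
by rewrite sandwich1 mul1mx mulmx1.
Qed.

Lemma flat_slocc_sym n d2 d3 (X Y : 'M[algC]_(n, d2 * d3)) :
  flat_slocc X Y -> flat_slocc Y X.
Proof.
move=> [L1 [L2 [L3 [u1 u2 u3 ->]]]].
exists (invmx L1), (invmx L2), (invmx L3); split; rewrite ?unitmx_inv //.
by rewrite -mulmxA -(mulmxA (L1 *m X)) sandwichM !mulVmx // sandwich1 mulmx1 mulKmx.
Qed.

Lemma flat_slocc_trans n d2 d3 (X Y Z : 'M[algC]_(n, d2 * d3)) :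
  flat_slocc X Y -> flat_slocc Y Z -> flat_slocc X Z.
Proof.
move=> [L1 [L2 [L3 [u1 u2 u3 ->]]]] [M1 [M2 [M3 [v1 v2 v3 ->]]]].
exists (M1 *m L1), (M2 *m L2), (M3 *m L3).
by split; rewrite ?unitmx_mul ?u1 ?u2 ?u3 ?v1 ?v2 ?v3 // -sandwichM !mulmxA.
Qed.

Lemma flat_slocc_of_submx n d2 d3 (X Y : 'M[algC]_(n, d2 * d3)) :
  row_free Y -> (Y <= X)%MS -> flat_slocc X Y.
Proof.
move=> freeY sYX; set L := Y *m pinvmx X.
have eqY : Y = L *m X by rewrite mulmxKpV.
exists L, 1%:M, 1%:M; split; rewrite ?unitmx1 ?sandwich1 ?mulmx1 //.
rewrite -row_full_unit /row_full eqn_leq rank_leq_row /=.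
by move/eqP: freeY => {1}<-; rewrite {1}eqY; apply: mxrankM_maxl.
Qed.

Definition perp n d (A : 'M[algC]_(n, d)) := kermx (conjmx A)^T.
Definition perp_basis n m d (A : 'M[algC]_(n, d)) (Q : 'M[algC]_(m, d)) :=
  row_free Q /\ (Q == perp A)%MS.

Lemma rank_perp n d (A : 'M[algC]_(n, d)) : \rank (perp A) = (d - \rank A)%N.
Proof. by rewrite /perp mxrank_ker mxrank_tr mxrank_map. Qed.

Lemma perp_basis_exists n d k (A : 'M[algC]_(n, d)) :
  \rank (perp A) = k -> exists Q : 'M[algC]_(k, d), perp_basis A Q.
Proof.
move=> rk; exists (castmx (rk, erefl) (row_base (perp A))); split.
  by rewrite row_free_castmx row_base_free.
by apply/eqmxP; apply: eqmx_trans (eqmx_cast _ _) (eq_row_base _).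
Qed.

Lemma perp_basis_by_rank n m d (B : 'M[algC]_(n, d)) (Q' : 'M[algC]_(m, d)) :
  row_free Q' -> (Q' <= perp B)%MS -> \rank Q' = \rank (perp B) -> perp_basis B Q'.
Proof.
move=> freeQ' sQ' rkQ'; split=> //.
by rewrite -(mxrank_leqif_eq sQ').2 eqn_leq (mxrank_leqif_eq sQ').1 rkQ' /=.
Qed.

(* Transport: SLOCC maps perp bases to perp bases, via the contragredient
   action on the second and third factors. *)
Lemma perp_basis_transport n m d2 d3 (A B : 'M[algC]_(n, d2 * d3))
    (Q : 'M[algC]_(m, d2 * d3)) :
  flat_slocc A B -> perp_basis A Q -> exists Q', flat_slocc Q Q' /\ perp_basis B Q'.
Proof.
move=> [L1 [L2 [L3 [u1 u2 u3 ->]]]] [freeQ /eqmxP eqQ].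
set N2 := (conjmx L2)^T; set N3 := (conjmx L3)^T.
have uN2 : N2 \in unitmx by rewrite unitmx_tr map_unitmx.
have uN3 : N3 \in unitmx by rewrite unitmx_tr map_unitmx.
have uS : sandwich (invmx N2) (invmx N3) \in unitmx.
  by apply: sandwich_unit; rewrite unitmx_inv.
exists (Q *m sandwich (invmx N2) (invmx N3)); split.
  exists 1%:M, (invmx N2), (invmx N3).
  by split; rewrite ?unitmx1 ?unitmx_inv ?mul1mx.
have rkQ' : \rank (Q *m sandwich (invmx N2) (invmx N3)) = \rank Q.
  by rewrite mxrankMfree // row_free_unit.
apply: perp_basis_by_rank; first by rewrite /row_free rkQ'.
- rewrite /perp sub_kermx !map_mxM !trmx_mul sandwich_adjoint !mulmxA -/N2 -/N3.
  rewrite -(mulmxA Q) sandwichM !mulmxV // sandwich1 mulmx1.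
  have : (Q <= perp A)%MS by rewrite eqQ.
  by rewrite /perp sub_kermx => /eqP ->; rewrite mul0mx.
- rewrite rkQ' eqQ !rank_perp mxrankMfree ?row_free_unit ?sandwich_unit //.
  by rewrite (eqmxMfull _ (_ : row_full L1)) // row_full_unit.
Qed.

Lemma perp_basis_sym n m d (A : 'M[algC]_(n, d)) (Q : 'M[algC]_(m, d)) :
  row_free A -> perp_basis A Q -> perp_basis Q A.
Proof.
move=> freeA [freeQ /eqmxP eqQ]; apply: perp_basis_by_rank => //.
- have : (Q <= perp A)%MS by rewrite eqQ.
  rewrite /perp !sub_kermx => /eqP QA0.
  have -> : A *m (conjmx Q)^T = conjmx ((Q *m (conjmx A)^T)^T).
    by rewrite trmx_mul trmxK map_mxM map_trmx conjmxK.
  by rewrite QA0 trmx0 map_mx0.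
- by rewrite rank_perp eqQ rank_perp subKn ?rank_leq_col // (eqP freeA).
Qed.

Lemma rhoA1_flat d1 d2 d3 (Phi : tensor3 d1 d2 d3) :
  rhoA1 Phi = flatA1 Phi *m (conjmx (flatA1 Phi))^T.
Proof.
apply/matrixP=> i i'; rewrite !mxE.
rewrite (eq_bigr (fun x => mxvec (Phi i) 0 x * mxvec (conjmx (Phi i')) 0 x)).
  by rewrite sum_mxvec_mul; apply: eq_bigr => j _; apply: eq_bigr => l _; rewrite mxE.
by move=> x _; rewrite !mxE -map_mxvec mxE.
Qed.

Lemma row_free_rhoA1 d1 d2 d3 (Phi : tensor3 d1 d2 d3) :
  \rank (rhoA1 Phi) = d1 -> row_free (flatA1 Phi).
Proof.
move=> rk; rewrite /row_free eqn_leq rank_leq_row /=.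
by rewrite -{1}rk rhoA1_flat mxrankM_maxl.
Qed.

Lemma TA1_perp_basis d1 d2 d3 k (Phi : tensor3 d1 d2 d3) (Q : 'M[algC]_(k, d2 * d3)) :
  perp_basis (flatA1 Phi) Q -> TA1 Phi (unflat Q).
Proof.
move=> pQ; exists (unflat Q); split; first by rewrite /perp_basis_tensor flat_unflat.
by apply/sloccE; apply: flat_slocc_refl.
Qed.

Lemma TA1_slocc d1 d2 d3 k (Phi Psi : tensor3 d1 d2 d3) (X : tensor3 k d2 d3) :
  slocc Phi Psi -> TA1 Phi X -> TA1 Psi X.
Proof.
move=> /sloccE sPP [Q [pQ /sloccE sQX]].
have [Q' [sQQ' pQ']] := perp_basis_transport sPP pQ.
exists (unflat Q'); split; first by rewrite /perp_basis_tensor flat_unflat.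
by apply/sloccE; rewrite flat_unflat; apply: flat_slocc_trans (flat_slocc_sym sQQ') sQX.
Qed.

Unset Implicit Arguments.

Theorem mainTheorem9 (d1 d2 d3 k : nat)
    (hd2 : (2 <= d2)%N) (hd3 : (2 <= d3)%N) (hk : (1 <= k)%N)
    (hd1 : d1 = (d2 * d3 - k)%N) (hd1pos : (1 <= d1)%N)
    (Phi Psi : tensor3 d1 d2 d3)
    (hPhi : \rank (rhoA1 Phi) = d1) (hPsi : \rank (rhoA1 Psi) = d1) :
  slocc Phi Psi <-> (forall X : tensor3 k d2 d3, TA1 Phi X <-> TA1 Psi X).
Proof.
split=> [sPP X | sameT].
  by split; apply: TA1_slocc => //; apply/sloccE/flat_slocc_sym/sloccE.
have freePhi := row_free_rhoA1 hPhi; have freePsi := row_free_rhoA1 hPsi.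
have rk_perp : \rank (perp (flatA1 Phi)) = k.
  rewrite rank_perp (eqP freePhi) hd1 subKn //.
  have : (0 < d2 * d3 - k)%N by rewrite -hd1.
  by rewrite subn_gt0 => /ltnW.
have [Q pQ] := perp_basis_exists rk_perp.
(* Q lies in T^{A1}(Psi): it is SLOCC equivalent to a perp basis Q' of Psi. *)
have [Q' [pQ' /sloccE]] := (sameT (unflat Q)).1 (TA1_perp_basis pQ).
rewrite flat_unflat => sQ'Q.
(* Transport Psi, a perp basis of Q', to B ~ Psi, a perp basis of Q. *)
have [B [sPsiB [_ /eqmxP eqB]]] :=
  perp_basis_transport sQ'Q (perp_basis_sym freePsi pQ').
have [_ /eqmxP eqPhi] := perp_basis_sym freePhi pQ.
apply/sloccE/flat_slocc_sym; apply: flat_slocc_trans sPsiB _.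
by apply: flat_slocc_of_submx => //; rewrite eqPhi -eqB.
Qed.
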